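(* Let $m\ge 1$ and consider the labeled chip-firing process on $\mathbb{Z}$ starting with $2m$ chips labeled $-m,\dots,-1,1,\dots,m$ at site $0$. In any sequence of firing moves, at every point of the process: for each label $k<0$, the position of chip $k$ is at most $k+m$; and for each label $k>0$, the position of chip $k$ is at least $k-m$.
   Context: Labeled chip-firing on the infinite path graph $\mathbb{Z}$ (each integer $i$ adjacent to $i-1$ and $i+1$): a firing move consists of choosing two chips with labels $a<b$ located at a common site $i$, and moving chip $a$ to site $i-1$ and chip $b$ to site $i+1$. *)

From Stdlib Require Import ZArith Relations.
Open Scope Z_scope.

Definition is_label (m k : Z) : Prop := -m <= k <= m /\ k <> 0.

(* A configuration assigns to each label the site (an integer) of that chip. *)
Definition config := Z -> Z.

Definition init_config : config := fun _ => 0.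

Definition fire (p : config) (a b : Z) : config :=
  fun k => if Z.eq_dec k a then p a - 1
           else if Z.eq_dec k b then p b + 1
           else p k.

Definition fire_step (m : Z) (p q : config) : Prop :=
  exists a b, is_label m a /\ is_label m b /\ a < b /\ p a = p b /\ q = fire p a b.

Definition reachable (m : Z) (q : config) : Prop :=
  clos_refl_trans_1n config (fire_step m) init_config q.

(* A chip moves right only when it is the larger label b of a firing pair
   (a, b) sharing a site.  If b < 0 then a < b < 0 too, so by induction the
   common site is at most a + m <= b - 1 + m, and after the move b sits at most
   at b + m; moving left never breaks an upper bound.  Positive labels are the
   mirror image: they move left only as the smaller label a of a pair with
   0 < a < b. *)

From Stdlib Require Import ZArith Relations Lia.
Open Scope Z_scope.

Lemma fire_left (p : config) (a b : Z) : fire p a b a = p a - 1.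
Proof. unfold fire; now destruct (Z.eq_dec a a). Qed.

Lemma fire_right (p : config) (a b : Z) : a <> b -> fire p a b b = p b + 1.
Proof.
  intros Hab; unfold fire.
  destruct (Z.eq_dec b a); [lia|]; now destruct (Z.eq_dec b b).
Qed.

Lemma fire_other (p : config) (a b k : Z) :
  k <> a -> k <> b -> fire p a b k = p k.
Proof.
  intros Ha Hb; unfold fire.
  now destruct (Z.eq_dec k a); [|destruct (Z.eq_dec k b)].
Qed.

Definition neg_chips_bounded (m : Z) (q : config) : Prop :=
  forall k, is_label m k -> k < 0 -> q k <= k + m.

Definition pos_chips_bounded (m : Z) (q : config) : Prop :=
  forall k, is_label m k -> 0 < k -> k - m <= q k.

Lemma fire_step_neg_chips_bounded (m : Z) (p q : config) :
  neg_chips_bounded m p -> fire_step m p q -> neg_chips_bounded m q.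
Proof.
  intros Hp [a [b [La [Lb [Hab [Hsite ->]]]]]] k Lk Hk.
  destruct (Z.eq_dec k a) as [->|Ka].
  - rewrite fire_left; specialize (Hp a La Hk); lia.
  - destruct (Z.eq_dec k b) as [->|Kb]; [|rewrite fire_other; auto].
    rewrite fire_right by lia.
    specialize (Hp a La ltac:(lia)); lia.
Qed.

Lemma fire_step_pos_chips_bounded (m : Z) (p q : config) :
  pos_chips_bounded m p -> fire_step m p q -> pos_chips_bounded m q.
Proof.
  intros Hp [a [b [La [Lb [Hab [Hsite ->]]]]]] k Lk Hk.
  destruct (Z.eq_dec k b) as [->|Kb].
  - rewrite fire_right by lia; specialize (Hp b Lb Hk); lia.
  - destruct (Z.eq_dec k a) as [->|Ka]; [|rewrite fire_other; auto].
    rewrite fire_left.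
    specialize (Hp b Lb ltac:(lia)); lia.
Qed.

Lemma reachable_ind (m : Z) (P : config -> Prop) :
  P init_config -> (forall p q, P p -> fire_step m p q -> P q) ->
  forall q, reachable m q -> P q.
Proof.
  intros Hinit Hstep q Hq; revert Hinit.
  induction Hq as [|p p' q Hpp' _ IH]; auto.
  intros Hp; exact (IH (Hstep p p' Hp Hpp')).
Qed.

Theorem lemma2p8 (m : Z) (hm : 1 <= m) (q : config) (hq : reachable m q) :
  (forall k, is_label m k -> k < 0 -> q k <= k + m) /\
  (forall k, is_label m k -> 0 < k -> k - m <= q k).
Proof.
  split.
  - apply (reachable_ind m (neg_chips_bounded m)); auto.
    + unfold neg_chips_bounded, init_config, is_label; intros; lia.
    + exact (fire_step_neg_chips_bounded m).
  - apply (reachable_ind m (pos_chips_bounded m)); auto.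
    + unfold pos_chips_bounded, init_config, is_label; intros; lia.
    + exact (fire_step_pos_chips_bounded m).
Qed.
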